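(* For all $m,t\in\mathbb{N}$, $R_t(0,m) = 2^m-\lceil 2^{m-t}\rceil$.
   Context: For a $t\times n$ matrix $\mathbf{v}$ over $\mathbb{F}_2$ with rows $\overline{v}_1,\dots,\overline{v}_t$, $\mathrm{wt}^{(t)}(\mathbf{v})=\left|\bigcup_{i} \mathrm{supp}(\overline{v}_i)\right|$ and $d^{(t)}(\mathbf{u},\mathbf{v})=\mathrm{wt}^{(t)}(\mathbf{u}-\mathbf{v})$. For a linear code $C\subseteq\mathbb{F}_2^n$, $C^t$ is the set of $t\times n$ matrices all of whose rows lie in $C$, and the $t$-th generalized covering radius $R_t(C)$ is the smallest integer $\rho$ such that for every $\mathbf{v}\in\mathbb{F}_2^{t\times n}$ some $\mathbf{c}\in C^t$ has $d^{(t)}(\mathbf{v},\mathbf{c})\le\rho$. $\mathrm{RM}(0,m)=\{\overline{0},\overline{1}\}\subseteq\mathbb{F}_2^{2^m}$ is the binary repetition code of length $2^m$, and $R_t(0,m)=R_t(\mathrm{RM}(0,m))$. *)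

From HB Require Import structures.
From mathcomp Require Import all_boot all_order all_algebra.
Set Implicit Arguments. Unset Strict Implicit. Unset Printing Implicit Defensive.
Import GRing.Theory.
Local Open Scope ring_scope.

Definition gwt (t n : nat) (v : 'M['F_2]_(t, n)) : nat :=
  #|[set j : 'I_n | [exists i : 'I_t, v i j != 0]]|.

Definition gdist (t n : nat) (u v : 'M['F_2]_(t, n)) : nat := gwt (u - v).

Definition in_code_pow (n t : nat) (C : {set 'rV['F_2]_n}) (c : 'M['F_2]_(t, n)) : bool :=
  [forall i : 'I_t, row i c \in C].

Definition gcovers (n t : nat) (C : {set 'rV['F_2]_n}) (rho : nat) : Prop :=
  forall v : 'M['F_2]_(t, n), exists c : 'M['F_2]_(t, n),
    in_code_pow C c /\ (gdist v c <= rho)%N.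

Definition is_gen_covering_radius (n t : nat) (C : {set 'rV['F_2]_n}) (rho : nat) : Prop :=
  @gcovers n t C rho /\ forall r : nat, @gcovers n t C r -> (rho <= r)%N.

Definition RM0 (m : nat) : {set 'rV['F_2]_(2 ^ m)} :=
  [set 0; const_mx 1].

From mathcomp Require Import all_boot all_order all_algebra.
Import GRing.Theory.

Set Implicit Arguments.
Unset Strict Implicit.
Unset Printing Implicit Defensive.

(* d^(t)(v, c) counts the columns in which v and c differ, and the elements of
   C^t for the repetition code are the matrices whose columns are all equal.
   Among the 2^t possible columns one occurs in v at least ceil(2^m / 2^t)
   times (pigeonhole), so some c agrees with v on that many columns.
   Conversely, in the matrix whose j-th column lists the t lowest binary digits
   of j, each column occurs at most 2^(m-t) times, since j is determined by
   these digits together with j / 2^t < 2^(m-t). *)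

Lemma pigeonhole_fiber (aT rT : finType) (f : aT -> rT) (q : nat) :
  #|rT| * q < #|aT| -> exists b, q < #|[set x | f x == b]|.
Proof.
move=> card_gt; apply/existsP; apply: contraLR card_gt => /existsPn small.
rewrite -leqNgt -sum1_card (partition_big f predT) //= -sum_nat_const.
apply: leq_sum => b _; rewrite sum1_card.
by have := small b; rewrite cardsE -leqNgt.
Qed.

Lemma eqn_binary_digits (k a b : nat) :
  (forall i, (i < k) -> odd (a %/ 2 ^ i) = odd (b %/ 2 ^ i)) ->
  a %/ 2 ^ k = b %/ 2 ^ k -> a = b.
Proof.
elim: k a b => [|k IHk] a b digits_eq; first by rewrite expn0 !divn1.
rewrite expnS !divnMA !divn2 => half_quot_eq.
have odd_eq : odd a = odd b by have := digits_eq 0 isT; rewrite expn0 !divn1.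
have half_eq : a./2 = b./2.
  apply: IHk half_quot_eq => i lt_ik.
  by rewrite -!divn2 -!divnMA -expnS; apply: digits_eq.
by rewrite -(odd_double_half a) -(odd_double_half b) odd_eq half_eq.
Qed.

Definition rep_code (n : nat) : {set 'rV['F_2]_n} := [set 0; const_mx 1]%R.

Section RepetitionCode.
Variables t n : nat.
Implicit Types u v c : 'M['F_2]_(t, n).

Lemma gdistE u v : gdist u v = (n - #|[set j | col j u == col j v]|).
Proof.
rewrite /gdist /gwt -[X in (X - _)]card_ord.
rewrite -(cardsC [set j | col j u == col j v]) addKn.
apply: eq_card => j; rewrite !inE -[LHS]negbK negb_exists; congr (~~ _).
apply/forallP/eqP => [eq_ij | /colP eq_col i].
  by apply/colP => i; have := eq_ij i; rewrite negbK !mxE subr_eq0 => /eqP.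
by have := eq_col i; rewrite negbK !mxE subr_eq0 => ->.
Qed.

Lemma const_col_in_code_pow (b : 'cV['F_2]_t) :
  in_code_pow (rep_code n) (\matrix_(i, j) b i ord0).
Proof.
apply/forallP => i; rewrite !inE.
have [b_i0 | b_i1] : b i ord0 = 0%R \/ b i ord0 = 1%R.
  by case: (b i ord0) => [[|[|k]] lt_k2]; [left | right | by []]; apply: val_inj.
- by rewrite orbC; apply/orP; right; apply/eqP/rowP => j; rewrite !mxE b_i0.
- by apply/orP; right; apply/eqP/rowP => j; rewrite !mxE b_i1.
Qed.

Lemma in_code_pow_col_const c j j' :
  in_code_pow (rep_code n) c -> col j c = col j' c.
Proof.
move=> /forallP c_rows; apply/colP => i; rewrite !mxE.
move: (c_rows i); rewrite !inE => /orP[] /eqP row_i;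
  by have := congr1 (fun r : 'rV['F_2]_n => r ord0 j) row_i;
     have := congr1 (fun r : 'rV['F_2]_n => r ord0 j') row_i; rewrite !mxE => -> ->.
Qed.

Lemma rep_code_pow_cover v q : (2 ^ t * q < n) ->
  exists c, in_code_pow (rep_code n) c /\ (gdist v c <= n - q.+1).
Proof.
have card_cols : #|{: 'cV['F_2]_t}| = (2 ^ t) by rewrite card_mx card_ord muln1.
rewrite -card_cols -[X in (_ < X)]card_ord.
move=> /(pigeonhole_fiber (fun j => col j v)) [b many_b].
exists (\matrix_(i, j) b i ord0)%R; split; first exact: const_col_in_code_pow.
rewrite gdistE leq_sub2l //; apply: leq_trans many_b _; rewrite subset_leq_card //.
by apply/subsetP => j; rewrite !inE => /eqP ->; apply/eqP/colP => i; rewrite !mxE.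
Qed.

Definition binary_mx : 'M['F_2]_(t, n) := (\matrix_(i, j) (odd (j %/ 2 ^ i)%N)%:R)%R.

Lemma card_binary_col_le (b : 'cV['F_2]_t) q : (n <= 2 ^ t * q) ->
  (#|[set j | col j binary_mx == b]| <= q).
Proof.
move=> n_le.
have quot_lt (j : 'I_n) : (j %/ 2 ^ t < q).
  by rewrite ltn_divLR ?expn_gt0 // mulnC; apply: leq_trans n_le.
rewrite -(@card_in_imset _ _ (fun j => Ordinal (quot_lt j))).
  by apply: leq_trans (max_card _) _; rewrite card_ord.
move=> j1 j2; rewrite !inE => /eqP col1 /eqP col2 [quot_eq]; apply: val_inj.
move: quot_eq; apply: eqn_binary_digits => i lt_it.
have := congr1 (fun x : 'cV_t => x (Ordinal lt_it) ord0) (etrans col1 (esym col2)).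
by rewrite !mxE /=; case: (odd _); case: (odd _).
Qed.

Lemma binary_mx_far c q : (n <= 2 ^ t * q) ->
  in_code_pow (rep_code n) c -> (n - q <= gdist binary_mx c).
Proof.
move=> n_le c_code; rewrite gdistE leq_sub2l //.
have [-> | [j0 _]] := set_0Vmem [set j | col j binary_mx == col j c].
  by rewrite cards0.
apply: leq_trans (subset_leq_card _) (card_binary_col_le (col j0 c) n_le).
by apply/subsetP => j; rewrite !inE (in_code_pow_col_const j j0 c_code).
Qed.

End RepetitionCode.

(* ceil(2^(m-t)) = 2^(m - t) with truncated nat subtraction (equals 1 when t > m) *)
Theorem proposition9 (m t : nat) :
  @is_gen_covering_radius (2 ^ m) t (RM0 m) (2 ^ m - 2 ^ (m - t))%N.
Proof.
have cover_bound : 2 ^ t * (2 ^ (m - t)).-1 < 2 ^ m.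
  have [le_tm | lt_mt] := leqP t m.
    by rewrite -subn1 mulnBr muln1 -expnD subnKC // ltn_subrL !expn_gt0.
  by rewrite (eqP (ltnW lt_mt)) expn0 muln0 expn_gt0.
have far_bound : 2 ^ m <= 2 ^ t * 2 ^ (m - t).
  by rewrite -expnD leq_pexp2l // -leq_subLR.
split=> [v | r covers].
  by have := rep_code_pow_cover v cover_bound; rewrite prednK ?expn_gt0.
have [c [c_code dist_le]] := covers (binary_mx t (2 ^ m)).
exact: leq_trans (binary_mx_far far_bound c_code) dist_le.
Qed.
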